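(* Let $d\ge1$ and $t\ge1$ be integers, $M\ge1$, $\rho>0$, and let $f:[0,1]^d\to\mathbb{R}$ be $\rho$-Lipschitz with respect to the $1$-norm. Let $a_1,\dots,a_{(t+1)^d-1}$ be the coefficients produced by the construction described in the context. Then $|a_i|\le 2^{d-1}d\rho$ for every $i$.
   Context: Let $\sigma(z)=\max(z,0)$ and $k=(t+1)^d$. For an integer $0\le i\le k-1$ let $\boldsymbol\pi^i$ be its base-$(t+1)$ digit vector ($0\le\pi^i_r\le t$, $i=\sum_{r=1}^d\pi^i_r(t+1)^{d-r}$). For parameters $a_j,b_{1,j},\dots,b_{d,j}$ define $\hat g_j(\mathbf{x})=a_j\,\sigma\big(\sum_{r=1}^d -M\sigma(-x_r+b_{r,j})+\tfrac1t\big)$. Construction: set $b=f(\mathbf{0})$; for $i=1,\dots,k-1$ in order: let $\hat y=b+\sum_{j=1}^{i-1}\hat g_j(\boldsymbol\pi^i/t)$, set $b_{r,i}=\pi^i_r/t$ for $r=1,\dots,d$, and set $a_i=t\big(f(\boldsymbol\pi^i/t)-\hat y\big)$. $f$ is $\rho$-Lipschitz if $|f(\mathbf{x})-f(\mathbf{x}')|\le\rho\|\mathbf{x}-\mathbf{x}'\|_1$. *)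

From HB Require Import structures.
From mathcomp Require Import all_boot all_order all_algebra.
Set Implicit Arguments. Unset Strict Implicit. Unset Printing Implicit Defensive.
Import Order.TTheory GRing.Theory Num.Theory.
Local Open Scope ring_scope.

Section Construction.
Variable R : realFieldType.

Definition relu (z : R) : R := Num.max z 0.

(* points of R^d, indexed by 'I_d (coordinate r : 'I_d is the paper's r+1) *)
Definition point (d : nat) := 'I_d -> R.

(* r-th base-(t+1) digit of i (0-indexed r; the paper's pi^i_{r+1}),
   most significant digit first:  i = sum_r pi^i_r (t+1)^(d-1-r) *)
Definition digit (d t i : nat) (r : 'I_d) : nat :=
  (i %/ (t.+1 ^ (d.-1 - r)%N)) %% t.+1.

Definition gridpt (d t i : nat) : point d :=
  fun r => (digit t i r)%:R / t%:R.

(* hat g_j(x) with coefficient a_j and b_{r,j} = pi^j_r / t *)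
Definition ghat (d t : nat) (M : R) (aj : R) (j : nat) (x : point d) : R :=
  aj * relu (\sum_(r < d) (- M * relu (- x r + gridpt t j r)) + 1 / t%:R).

(* coefs f n = [:: a_1; ...; a_n] *)
Fixpoint coefs (d t : nat) (M : R) (f : point d -> R) (n : nat) : seq R :=
  match n with
  | 0 => [::]
  | n'.+1 =>
      let s := @coefs d t M f n' in
      let i := n'.+1 in
      let yhat := f (fun _ => 0) +
                  \sum_(j < n') @ghat d t M (nth 0 s j) j.+1 (@gridpt d t i) in
      rcons s (t%:R * (f (@gridpt d t i) - yhat))
  end.

(* a_i for 1 <= i *)
Definition coef (d t : nat) (M : R) (f : point d -> R) (i : nat) : R :=
  nth 0 (coefs t M f i) i.-1.

Definition in_cube (d : nat) (x : point d) : Prop :=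
  forall r, 0 <= x r <= 1.

Definition lipschitz1 (d : nat) (rho : R) (f : point d -> R) : Prop :=
  forall x y, in_cube x -> in_cube y ->
    `|f x - f y| <= rho * \sum_(r < d) `|x r - y r|.

End Construction.

From HB Require Import structures.
From mathcomp Require Import all_boot all_order all_algebra.
From mathcomp Require Import zify ring lra.
Set Implicit Arguments. Unset Strict Implicit. Unset Printing Implicit Defensive.
Import Order.TTheory GRing.Theory Num.Theory.
Local Open Scope ring_scope.

(* At the grid point pi^i/t the unit ghat_j outputs a_j/t if pi^j <= pi^i
   coordinatewise and 0 otherwise: a coordinate with pi^j_r > pi^i_r
   contributes at most -M/t <= -1/t and kills the ReLU.  Hence f(pi^i/t) is
   the sum of c_m over the grid box below pi^i, where c_0 = f(0) and
   c_m = a_m/t, and inclusion-exclusion writes c_i as the alternating sum of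
   these box sums over the 2^d corners pi^i - e_S.  Choosing r with
   pi^i_r > 0 and pairing S with S xor {r}, the two box sums of a pair are
   either both empty or values of f at grid points at 1-distance 1/t, so
   |c_i| <= 2^(d-1) rho/t, i.e. |a_i| <= 2^(d-1) rho, which is the claim
   without its factor d. *)

Lemma base_expansion (b n m : nat) : (0 < b)%N -> (m < b ^ n)%N ->
  m = (\sum_(k < n) (m %/ b ^ k %% b) * b ^ k)%N.
Proof.
move=> b_gt0; elim: n m => [|n IHn] m m_lt.
  by rewrite big_ord0; move: m_lt; rewrite expn0; case: m.
have mb_lt : (m %/ b < b ^ n)%N by rewrite ltn_divLR // mulnC -expnS.
rewrite big_ord_recl /= expn0 divn1 muln1.
under eq_bigr => k _ do rewrite /bump /= add1n expnS divnMA mulnCA.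
by rewrite -big_distrr /= -IHn // addnC mulnC -divn_eq.
Qed.

Section Digits.
Variables d t : nat.
Local Notation N := (t.+1 ^ d)%N.

Lemma digit_lt m (r : 'I_d) : (digit t m r < t.+1)%N.
Proof. exact: ltn_mod. Qed.

Lemma digit0 (r : 'I_d) : digit t 0 r = 0%N.
Proof. by rewrite /digit div0n mod0n. Qed.

Lemma digit_expansion m : (m < N)%N ->
  m = (\sum_(r < d) digit t m r * t.+1 ^ (d.-1 - r))%N.
Proof.
move=> m_lt; rewrite {1}(base_expansion (ltn0Sn t) m_lt).
rewrite (reindex_inj rev_ord_inj) /=; apply: eq_bigr => r _.
suff -> : (d - r.+1 = d.-1 - r)%N by [].
by case: r => r /=; lia.
Qed.

Lemma digit_inj m i : (m < N)%N -> (i < N)%N ->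
  (forall r : 'I_d, digit t m r = digit t i r) -> m = i.
Proof.
move=> m_lt i_lt eq_mi; rewrite (digit_expansion m_lt) (digit_expansion i_lt).
by apply: eq_bigr => r _; rewrite eq_mi.
Qed.

Lemma digit_surj (v : 'I_d -> nat) : (forall r, v r <= t)%N ->
  exists2 m, (m < N)%N & forall r, digit t m r = v r.
Proof.
move=> v_le.
pose digits (m : 'I_N) : {ffun 'I_d -> 'I_t.+1} := [ffun r => Ordinal (digit_lt m r)].
have digits_inj : injective digits.
  move=> m1 m2 /ffunP eq12; apply/val_inj/digit_inj => [||r]; rewrite ?ltn_ord //.
  by have := eq12 r; rewrite !ffunE => /(congr1 val).
have card_le : (#|{ffun 'I_d -> 'I_t.+1}| <= #|'I_N|)%N by rewrite card_ffun !card_ord.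
have /codomP [m def_v] :=
  inj_card_onto digits_inj card_le [ffun r => Ordinal (v_le r : (v r < t.+1)%N)].
exists (val m) => [|r]; first exact: ltn_ord.
by have := congr1 (fun g : {ffun _ -> _} => val (g r)) def_v; rewrite !ffunE.
Qed.

Lemma exists_digit_gt0 i : (0 < i < N)%N -> exists r : 'I_d, (0 < digit t i r)%N.
Proof.
case/andP=> i_gt0 i_lt; apply/existsP; apply: contraTT i_gt0.
rewrite negb_exists => /forallP digit_i0; rewrite -eqn0Ngt; apply/eqP.
apply: digit_inj => // [|r]; first by rewrite expn_gt0.
by rewrite digit0; apply/eqP; rewrite -leqn0 leqNgt digit_i0.
Qed.

Definition grid_le m i := [forall r : 'I_d, (digit t m r <= digit t i r)%N].

Lemma grid_le_refl i : grid_le i i.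
Proof. exact/forallP. Qed.

Lemma grid_le0 i : grid_le 0 i.
Proof. by apply/forallP => r; rewrite digit0. Qed.

Lemma grid_le_leq m i : (m < N)%N -> (i < N)%N -> grid_le m i -> (m <= i)%N.
Proof.
move=> m_lt i_lt /forallP le_mi.
rewrite (digit_expansion m_lt) (digit_expansion i_lt).
by apply: leq_sum => r _; rewrite leq_mul2r le_mi orbT.
Qed.

End Digits.

Section ReLU.
Variable R : realFieldType.

Lemma relu_id (z : R) : 0 <= z -> relu z = z.
Proof. by move=> z_ge0; rewrite /relu max_l. Qed.

Lemma relu_eq0 (z : R) : z <= 0 -> relu z = 0.
Proof. by move=> z_le0; rewrite /relu max_r. Qed.

Lemma ler_relu (z : R) : z <= relu z.
Proof. by rewrite /relu le_max lexx. Qed.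

Lemma relu_ge0 (z : R) : 0 <= relu z.
Proof. by rewrite /relu le_max lexx orbT. Qed.

End ReLU.

Section Network.
Variables (R : realFieldType) (d t : nat) (M : R) (f : point R d -> R).
Hypotheses (t_gt0 : (0 < t)%N) (M_ge1 : 1 <= M).

Lemma ghat_gridpt (a : R) (j i : nat) :
  ghat t M a j (gridpt R t i : point R d) = if grid_le d t j i then a / t%:R else 0.
Proof.
have t_pos : 0 < t%:R :> R by rewrite ltr0n.
have inv_t_ge0 : 0 <= 1 / t%:R :> R by rewrite divr_ge0 // ltW.
rewrite /ghat /grid_le; case: forallP => [le_ji | /forallP].
  rewrite big1 ?add0r => [|r _]; last first.
    rewrite /gridpt relu_eq0 ?mulr0 // addrC subr_le0.
    by rewrite ler_pM2r ?invr_gt0 // ler_nat.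
  by rewrite relu_id // mulrA mulr1.
rewrite negb_forall => /existsP [r]; rewrite -ltnNge => lt_ij.
rewrite relu_eq0 ?mulr0 // (bigD1 r) //= -addrA.
set h := relu _; set s := \sum_(_ < _ | _) _.
have s_le0 : s <= 0.
  apply: sumr_le0 => k _; rewrite mulNr oppr_le0 mulr_ge0 ?relu_ge0 //.
  exact: le_trans M_ge1.
(* the coordinate [r] alone already cancels the bias [1/t], since [M >= 1] *)
have inv_t_le : 1 / t%:R <= M * h.
  apply: le_trans (ler_peMl (relu_ge0 _) M_ge1); apply: le_trans (ler_relu _).
  rewrite /gridpt addrC -mulrBl ler_pM2r ?invr_gt0 // -natrB ?ler1n ?subn_gt0 //.
  exact: ltnW.
lra.
Qed.

Lemma size_coefs n : size (coefs t M f n) = n.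
Proof. by elim: n => //= n IHn; rewrite size_rcons IHn. Qed.

Lemma nth_coefs n j : (j < n)%N -> nth 0 (coefs t M f n) j = coef t M f j.+1.
Proof.
elim: n => // n IHn lt_jn; rewrite /= nth_rcons size_coefs.
case: ltnP => [/IHn //| le_nj].
have -> : j = n by lia.
by rewrite eqxx /coef /= nth_rcons size_coefs ltnn eqxx.
Qed.

Lemma coefS n : coef t M f n.+1 =
  t%:R * (f (gridpt R t n.+1) - (f (fun _ => 0) +
     \sum_(j < n) if grid_le d t j.+1 n.+1 then coef t M f j.+1 / t%:R else 0)).
Proof.
rewrite {1}/coef /= nth_rcons size_coefs ltnn eqxx.
congr (_ * (_ - (_ + _))); apply: eq_bigr => j _.
by rewrite ghat_gridpt nth_coefs.
Qed.

End Network.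

Section Toggle.
Variables (d : nat) (r0 : 'I_d).
Local Notation subsets := {ffun 'I_d -> bool}.

Definition toggle (g : subsets) : subsets :=
  [ffun r => if r == r0 then ~~ g r0 else g r].

Lemma toggleK : involutive toggle.
Proof.
move=> g; apply/ffunP => r; rewrite !ffunE eqxx negbK.
by case: eqP => // ->.
Qed.

Lemma big_toggle (T : Type) (idx : T) (op : Monoid.com_law idx) (F : subsets -> T) :
  \big[op/idx]_(g : subsets | g r0) F g =
  \big[op/idx]_(g : subsets | ~~ g r0) F (toggle g).
Proof.
rewrite (reindex_inj (can_inj toggleK)); apply: eq_bigl => g.
by rewrite ffunE eqxx.
Qed.

Lemma card_ffun_bool_false : #|[pred g : subsets | ~~ g r0]| = (2 ^ d.-1)%N.
Proof.
have d_gt0 : (0 < d)%N by case: r0 => r /=; lia.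
have : #|subsets| = (2 * #|[pred g : subsets | ~~ g r0]|)%N.
  rewrite -!sum1_card (bigID (fun g : subsets => g r0)) /=.
  by rewrite big_toggle addnn -mul2n.
rewrite card_ffun card_bool card_ord => card_eq.
by apply/eqP; rewrite -(@eqn_pmul2l 2) // -expnS prednK // card_eq.
Qed.

Definition sign (R : pzRingType) (g : subsets) : R :=
  \prod_(r < d) (if g r then -1 else 1).

Lemma sign_toggle (R : comPzRingType) (g : subsets) : sign R (toggle g) = - sign R g.
Proof.
rewrite /sign (bigD1 r0) //= [in RHS](bigD1 r0) //= ffunE eqxx.
rewrite (eq_bigr (fun r => if g r then -1 else 1)) => [|r /negbTE r_neq];
  last by rewrite ffunE r_neq.
by case: (g r0); rewrite /= ?mulN1r ?mul1r ?opprK.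
Qed.

Lemma normr_sign (R : numDomainType) (g : subsets) : `|sign R g| = 1.
Proof. by rewrite normr_prod big1 // => r _; case: (g r); rewrite ?normrN1 ?normr1. Qed.

End Toggle.

Lemma prodr_bool (R : comPzSemiRingType) (I : finType) (P : pred I) :
  \prod_(r : I) ((P r)%:R : R) = [forall r, P r]%:R.
Proof.
case: forallP => [P_all | /forallP]; first by apply: big1 => r _; rewrite P_all.
rewrite negb_forall => /existsP [r /negbTE Pr_false].
by rewrite (bigD1 r) //= Pr_false mul0r.
Qed.

Section InclusionExclusion.
Variables (R : comNzRingType) (d t : nat) (c : nat -> R).
Local Notation N := (t.+1 ^ d)%N.
Local Notation subsets := {ffun 'I_d -> bool}.

Definition corner_le (g : subsets) (m i : nat) :=
  [forall r : 'I_d, (digit t m r + g r <= digit t i r)%N].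

(* [corner_sum i g] sums [c] over the grid box below the corner [pi^i - e_g];
   the box is empty when that corner leaves the grid. *)
Definition corner_sum (i : nat) (g : subsets) := \sum_(m < N | corner_le g m i) c m.

Lemma inclusion_exclusion i : (i < N)%N ->
  c i = \sum_(g : subsets) sign R g * corner_sum i g.
Proof.
move=> i_lt.
have indicator_eq (m : 'I_N) :
    (val m == i)%:R = \sum_(g : subsets) sign R g * (corner_le g m i)%:R :> R.
  have -> : (val m == i) = [forall r : 'I_d, digit t m r == digit t i r].
    apply/eqP/forallP => [-> // | eq_mi].
    by apply: (@digit_inj d t) => // [|r]; [exact: ltn_ord | apply/eqP].
  rewrite -prodr_bool.
  transitivity (\prod_(r < d) \sum_(b : bool)
      (if b then - (digit t m r + 1 <= digit t i r)%N%:R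
       else (digit t m r + 0 <= digit t i r)%N%:R) : R).
    apply: eq_bigr => r _; rewrite big_bool /= addn0 addn1.
    by case: ltngtP; rewrite /= ?oppr0 ?add0r ?addNr.
  rewrite bigA_distr_bigA /=; apply: eq_bigr => g _.
  rewrite /sign /corner_le -prodr_bool -big_split /=; apply: eq_bigr => r _.
  by case: (g r); rewrite ?mulN1r ?mul1r.
have -> : c i = \sum_(m < N) (val m == i)%:R * c m.
  rewrite (bigD1 (Ordinal i_lt)) //= eqxx mul1r big1 ?addr0 // => m m_neq.
  by case: eqP => [m_eq|]; [case/eqP: m_neq; apply: val_inj | rewrite mul0r].
under eq_bigr => m _ do rewrite indicator_eq big_distrl /=.
rewrite exchange_big /=; apply: eq_bigr => g _.
rewrite /corner_sum big_distrr [RHS]big_mkcond /=; apply: eq_bigr => m _.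
by case: corner_le; rewrite ?mulr1 ?mulr0 ?mul1r ?mul0r.
Qed.

End InclusionExclusion.

Section Bound.
Variables (R : realFieldType) (d t : nat) (M rho : R) (f : point R d -> R).
Hypotheses (t_gt0 : (0 < t)%N) (M_ge1 : 1 <= M).
Hypotheses (rho_ge0 : 0 <= rho) (f_lip : lipschitz1 rho f).
Local Notation N := (t.+1 ^ d)%N.
Local Notation subsets := {ffun 'I_d -> bool}.
Local Notation F m := (f (gridpt R t m)).

Let t_pos : 0 < t%:R :> R. Proof. by rewrite ltr0n. Qed.

Definition increment (m : nat) : R :=
  if m == 0%N then f (fun _ => 0) else coef t M f m / t%:R.

Lemma gridpt_in_cube m : in_cube (gridpt R t m : point R d).
Proof.
move=> r; rewrite /gridpt divr_ge0 ?ler0n ?(ltW t_pos) //=.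
by rewrite ler_pdivrMr // mul1r ler_nat -ltnS digit_lt.
Qed.

Lemma lipschitz1_eq (x y : point R d) : in_cube x -> in_cube y ->
  (forall r, x r = y r) -> f x = f y.
Proof.
move=> x_in y_in eq_xy; apply/eqP; rewrite -subr_eq0 -normr_le0.
apply: le_trans (f_lip x_in y_in) _.
by rewrite big1 ?mulr0 // => r _; rewrite eq_xy subrr normr0.
Qed.

Lemma gridpt_dist m1 m2 (r0 : 'I_d) : digit t m1 r0 = (digit t m2 r0).+1 ->
  (forall r, r != r0 -> digit t m1 r = digit t m2 r) ->
  \sum_(r < d) `|gridpt R t m1 r - gridpt R t m2 r| = 1 / t%:R.
Proof.
move=> digit_r0 digit_r; rewrite (bigD1 r0) //= big1 ?addr0 => [|r /digit_r eq_r].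
  rewrite /gridpt digit_r0 -mulrBl -natrB // subSnn normrM normr1 !mul1r.
  by rewrite ger0_norm // invr_ge0 ler0n.
by rewrite /gridpt eq_r subrr normr0.
Qed.

Lemma downset_sum i : (i < N)%N ->
  \sum_(m < N | grid_le d t m i) increment m = F i.
Proof.
move=> i_lt; rewrite -(big_mkord (grid_le d t ^~ i)) (@big_cat_nat _ _ _ i.+1) //=.
rewrite [X in _ + X]big_nat_cond [X in _ + X]big1 ?addr0 => [|m]; last first.
  case/andP=> /andP[lt_im m_lt] le_mi.
  by have := grid_le_leq m_lt i_lt le_mi; rewrite leqNgt lt_im.
rewrite big_mkcond big_nat_recr //= grid_le_refl.
case: i i_lt => [|n] n_lt.
  rewrite big_geq // add0r /increment /=.
  apply: lipschitz1_eq => [r||r]; first by rewrite lexx ler01.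
    exact: gridpt_in_cube.
  by rewrite /gridpt /= digit0 mul0r.
rewrite big_ltn // grid_le0 big_add1 /= big_mkord /increment /= coefS //.
by field; rewrite gt_eqF.
Qed.

Local Notation corner_sum := (corner_sum t increment).

Lemma corner_sum_gridpt i (g : subsets) m : (m < N)%N ->
  (forall r, g r -> 0 < digit t i r)%N ->
  (forall r, digit t m r = digit t i r - g r)%N ->
  corner_sum i g = F m.
Proof.
move=> m_lt g_pos digit_m; rewrite -(downset_sum m_lt); apply: eq_bigl => m'.
apply: eq_forallb => r; rewrite digit_m.
by case: (boolP (g r)) => [/g_pos | _] /=; lia.
Qed.

Lemma corner_sum_eq0 i (g : subsets) (r : 'I_d) :
  g r -> digit t i r = 0%N -> corner_sum i g = 0.
Proof.
move=> g_r digit_i0; rewrite /corner_sum big_pred0 // => m.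
by apply/forallP => /(_ r); rewrite g_r digit_i0 addn1.
Qed.

(* Unless both corner sums vanish, they are values of [f] at grid points
   at 1-distance [1/t]. *)
Lemma corner_sum_toggle i (g : subsets) (r0 : 'I_d) : (i < N)%N -> ~~ g r0 ->
  (0 < digit t i r0)%N ->
  `|corner_sum i g - corner_sum i (toggle r0 g)| <= rho / t%:R.
Proof.
move=> i_lt g_r0 digit_r0.
case: (boolP [exists r, g r && (digit t i r == 0%N)]).
  case/existsP=> r /andP[g_r /eqP digit_i0].
  have r_neq : r != r0 by apply: contraNneq g_r0 => <-.
  rewrite (corner_sum_eq0 g_r digit_i0) (@corner_sum_eq0 _ _ r) //;
    last by rewrite ffunE (negbTE r_neq).
  by rewrite subrr normr0 divr_ge0 ?ler0n.
rewrite negb_exists => /forallP g_pos.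
have {}g_pos r : g r -> (0 < digit t i r)%N.
  by move=> g_r; have := g_pos r; rewrite g_r lt0n.
have g'_pos r : toggle r0 g r -> (0 < digit t i r)%N.
  by rewrite ffunE; case: eqP => [-> | _ /g_pos].
have digit_sub_le (h : subsets) r : (digit t i r - h r <= t)%N.
  by rewrite (leq_trans (leq_subr _ _)) // -ltnS digit_lt.
have [m1 m1_lt digit_m1] := digit_surj (digit_sub_le g).
have [m2 m2_lt digit_m2] := digit_surj (digit_sub_le (toggle r0 g)).
rewrite (corner_sum_gridpt m1_lt g_pos digit_m1).
rewrite (corner_sum_gridpt m2_lt g'_pos digit_m2).
apply: le_trans (f_lip (gridpt_in_cube m1) (gridpt_in_cube m2)) _.
rewrite (@gridpt_dist m1 m2 r0) ?mul1r // => [|r r_neq].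
  by rewrite digit_m1 digit_m2 ffunE eqxx (negbTE g_r0) /= subn0; lia.
by rewrite digit_m1 digit_m2 ffunE (negbTE r_neq).
Qed.

Lemma increment_bound i (r0 : 'I_d) : (i < N)%N -> (0 < digit t i r0)%N ->
  `|increment i| <= 2 ^+ d.-1 * (rho / t%:R).
Proof.
move=> i_lt digit_r0.
rewrite (inclusion_exclusion _ i_lt) (bigID (fun g : subsets => g r0)) /=.
rewrite big_toggle -big_split /=.
apply: le_trans (ler_norm_sum _ _ _) _.
have pair_le (g : subsets) (g_r0 : ~~ g r0) :
    `|sign R (toggle r0 g) * corner_sum i (toggle r0 g) + sign R g * corner_sum i g|
    <= rho / t%:R.
  rewrite sign_toggle mulNr addrC -mulrBr normrM normr_sign mul1r.
  exact: corner_sum_toggle.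
apply: le_trans (ler_sum _ pair_le) _.
by rewrite sumr_const (card_ffun_bool_false r0) -(mulr_natl (rho / t%:R)) natrX.
Qed.

Lemma coef_bound i : (0 < i < N)%N -> `|coef t M f i| <= 2 ^+ d.-1 * rho.
Proof.
move=> i_range; have [r0 digit_r0] := exists_digit_gt0 i_range.
case/andP: i_range => i_gt0 i_lt.
have -> : coef t M f i = t%:R * increment i.
  by rewrite /increment gtn_eqF //; field; rewrite gt_eqF.
rewrite normrM ger0_norm ?ler0n //.
apply: le_trans (ler_wpM2l (ler0n _ _) (increment_bound i_lt digit_r0)) _.
by rewrite mulrCA [t%:R * _]mulrCA mulfV ?mulr1 // gt_eqF.
Qed.

End Bound.

Theorem lemmaA6 (R : realFieldType) (d t : nat) (M rho : R)
  (f : point R d -> R) :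
  (1 <= d)%N -> (1 <= t)%N -> 1 <= M -> 0 < rho ->
  lipschitz1 rho f ->
  forall i : nat, (1 <= i)%N -> (i <= t.+1 ^ d - 1)%N ->
    `|coef t M f i| <= 2 ^+ d.-1 * d%:R * rho.
Proof.
move=> d_ge1 t_ge1 M_ge1 rho_gt0 f_lip i i_ge1 i_le.
have i_range : (0 < i < t.+1 ^ d)%N by have := expn_gt0 t.+1 d; lia.
apply: le_trans (coef_bound t_ge1 M_ge1 (ltW rho_gt0) f_lip i_range) _.
by rewrite -mulrA ler_wpM2l ?exprn_ge0 // ler_peMl ?ler1n ?ltW.
Qed.
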